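(* Let $p\geq 1$ be an integer and define $\mathcal{G}_p:[-1,1]\times[-1,1]\to\mathbb{R}$ by $$\mathcal{G}_p(x,y)=\int_{-1}^1 \mathrm{ReLU}^p(z-x)\,\mathrm{ReLU}^p(z-y)\,dz .$$ Then, in the sense of distributions in $x$ (for fixed $y$), $$\frac{\partial^{2p+2}}{\partial x^{2p+2}}\mathcal{G}_p(x,y)=(-1)^{p-1}(p!)^2\,\delta(x-y),$$ where $\delta$ is the Dirac distribution.
   Context: $\mathrm{ReLU}^p(z)=(\max\{0,z\})^p$ for $z\in\mathbb{R}$. *)

From Stdlib Require Import Reals Factorial.
From Coquelicot Require Import Coquelicot.
Open Scope R_scope.

Definition relu_pow (p : nat) (z : R) : R := (Rmax 0 z) ^ p.

Definition G (p : nat) (x y : R) : R :=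
  RInt (fun z => relu_pow p (z - x) * relu_pow p (z - y)) (-1) 1.

Definition test_function (phi : R -> R) : Prop :=
  (forall (n : nat) (x : R), ex_derive_n phi n x) /\
  (exists a b : R, -1 < a /\ b < 1 /\ forall x, x < a \/ b < x -> phi x = 0).

(* The n-th distributional derivative (on (-1,1)) of the locally integrable
   function f equals the distribution T:
   for every test function phi, <f^{(n)}, phi> = (-1)^n \int f phi^{(n)} = T phi. *)
Definition distr_deriv_n_eq (f : R -> R) (n : nat) (T : (R -> R) -> R) : Prop :=
  forall phi, test_function phi ->
    (-1) ^ n * RInt (fun x => f x * Derive_n phi n x) (-1) 1 = T phi.

Definition dirac (y : R) : (R -> R) -> R := fun phi => phi y.

(* Pair G p (., y) with psi = phi^(2p+2) and swap the integrals (Fubini).  For fixed z,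
   the x-integral is int_{-1}^z (z-x)^p phi^(2p+2)(x) dx = p! phi^(p+1)(z): integrate by
   parts p times, all boundary terms vanish since z-z = 0 and phi is flat at -1.  The
   remaining z-integral int_y^1 (z-y)^p phi^(p+1)(z) dz = (-1)^(p+1) p! phi(y) is the same
   computation towards the right end point, where phi is flat at 1. *)
From Stdlib Require Import Reals Factorial Lra Lia.
From Coquelicot Require Import Coquelicot.
Open Scope R_scope.

Lemma continuity_pt_of_is_derive (f df : R -> R) :
  (forall x, is_derive f x (df x)) -> forall x, continuity_pt f x.
Proof.
  intros Hf x; apply continuity_pt_filterlim.
  apply (ex_derive_continuous (K := R_AbsRing) (V := R_NormedModule)).
  eexists; apply Hf.
Qed.

Lemma continuity_pt_pow_sub_l (c : R) (m : nat) (x : R) :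
  continuity_pt (fun x => (c - x) ^ m) x.
Proof.
  apply (continuity_pt_of_is_derive _ (fun x => - INR m * (c - x) ^ pred m)).
  intros t; auto_derive; auto; unfold Rminus; ring.
Qed.

Lemma continuity_pt_pow_sub_r (c : R) (m : nat) (x : R) :
  continuity_pt (fun x => (x - c) ^ m) x.
Proof.
  apply (continuity_pt_of_is_derive _ (fun x => INR m * (x - c) ^ pred m)).
  intros t; auto_derive; auto; unfold Rminus; ring.
Qed.

Lemma is_derive_pow_sub_l (c : R) (m : nat) (x : R) :
  is_derive (fun x => (c - x) ^ S m) x (- INR (S m) * (c - x) ^ m).
Proof. auto_derive; auto; destruct m; unfold Rminus; simpl; ring. Qed.

Lemma is_derive_pow_sub_r (c : R) (m : nat) (x : R) :
  is_derive (fun x => (x - c) ^ S m) x (INR (S m) * (x - c) ^ m).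
Proof. auto_derive; auto; destruct m; unfold Rminus; simpl; ring. Qed.

Lemma ex_RInt_continuity_pt (f : R -> R) (a b : R) :
  (forall x, continuity_pt f x) -> ex_RInt f a b.
Proof.
  intros Hf; apply (ex_RInt_continuous (V := R_CompleteNormedModule)); intros z _.
  apply continuity_pt_filterlim, Hf.
Qed.

Lemma RInt_ext_R (f g : R -> R) (a b : R) :
  (forall x, Rmin a b < x < Rmax a b -> f x = g x) -> RInt f a b = RInt g a b.
Proof. apply (RInt_ext (V := R_CompleteNormedModule)). Qed.

Lemma RInt_mult_l (c : R) (f : R -> R) (a b : R) :
  ex_RInt f a b -> RInt (fun x => c * f x) a b = c * RInt f a b.
Proof. apply (RInt_scal (V := R_CompleteNormedModule)). Qed.

Lemma RInt_mult_r (c : R) (f : R -> R) (a b : R) :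
  ex_RInt f a b -> RInt (fun x => f x * c) a b = RInt f a b * c.
Proof.
  intros Hf; rewrite <- (Rmult_comm c), <- RInt_mult_l by exact Hf.
  apply RInt_ext_R; intros; ring.
Qed.

Lemma RInt_zero (a b : R) : RInt (fun _ => 0) a b = 0.
Proof. rewrite (RInt_const (V := R_CompleteNormedModule)); apply Rmult_0_r. Qed.

Lemma RInt_by_parts (u du v dv : R -> R) (a b : R) :
  (forall x, is_derive u x (du x)) -> (forall x, is_derive v x (dv x)) ->
  (forall x, continuity_pt du x) -> (forall x, continuity_pt dv x) ->
  RInt (fun x => u x * dv x) a b = u b * v b - u a * v a - RInt (fun x => du x * v x) a b.
Proof.
  intros Hu Hv Cdu Cdv.
  pose proof (continuity_pt_of_is_derive _ _ Hu) as Cu.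
  pose proof (continuity_pt_of_is_derive _ _ Hv) as Cv.
  assert (Hprod : RInt (fun x => du x * v x + u x * dv x) a b = u b * v b - u a * v a).
  { apply is_RInt_unique, (is_RInt_derive (V := R_CompleteNormedModule) (fun x => u x * v x)).
    - intros x _; apply (is_derive_mult (K := R_AbsRing)); auto.
      intros; apply Rmult_comm.
    - intros x _; apply continuity_pt_filterlim.
      apply continuity_pt_plus; apply continuity_pt_mult; auto. }
  rewrite (RInt_plus (V := R_CompleteNormedModule)) in Hprod
    by (apply ex_RInt_continuity_pt; intros; apply continuity_pt_mult; auto).
  change (plus ?s ?t) with (s + t) in Hprod; lra.
Qed.

Lemma continuity_2d_pt_swap (F : R -> R -> R) (x z : R) :
  continuity_2d_pt F x z -> continuity_2d_pt (fun a b => F b a) z x.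
Proof. intros H eps; destruct (H eps) as [d Hd]; exists d; intros u v Hu Hv; auto. Qed.

Lemma continuity_2d_pt_snd (F : R -> R -> R) (x z : R) :
  continuity_2d_pt F x z -> continuity_pt (fun t => F x t) z.
Proof.
  intros HF eps Heps; destruct (HF (mkposreal eps Heps)) as [d Hd].
  exists d; split; [apply cond_pos |]; intros t [_ Ht]; simpl in *; unfold R_dist in *.
  apply Hd; auto; rewrite Rminus_eq_0, Rabs_R0; apply cond_pos.
Qed.

Lemma continuity_2d_pt_fst (F : R -> R -> R) (x z : R) :
  continuity_2d_pt F x z -> continuity_pt (fun t => F t z) x.
Proof. intros HF; apply (continuity_2d_pt_snd (fun a b => F b a)), continuity_2d_pt_swap, HF. Qed.

Section ContinuousParametricIntegral.

Variable F : R -> R -> R.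
Hypothesis F_cont : forall x z, continuity_2d_pt F x z.

Lemma continuity_pt_RInt_param_le (c d x0 : R) : c <= d ->
  continuity_pt (fun x => RInt (F x) c d) x0.
Proof.
  intros Hcd eps Heps.
  assert (Heps' : 0 < eps / (d - c + 1)) by (apply Rdiv_lt_0_compat; lra).
  destruct (uniform_continuity_2d_1d' F c d x0 (fun z _ => F_cont x0 z) (mkposreal _ Heps'))
    as [delta Hdelta].
  exists delta; split; [apply cond_pos |]; intros x [_ Hx]; simpl in *; unfold R_dist in *.
  assert (Hex : forall w, ex_RInt (F w) c d)
    by (intros; apply ex_RInt_continuity_pt; intros; apply continuity_2d_pt_snd, F_cont).
  rewrite <- (RInt_minus (V := R_CompleteNormedModule)) by apply Hex.
  apply Rle_lt_trans with ((d - c) * (eps / (d - c + 1))).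
  - apply abs_RInt_le_const; auto.
    + apply (ex_RInt_minus (V := R_CompleteNormedModule)); apply Hex.
    + intros t Ht; apply Rlt_le; destruct (Rabs_def2 _ _ Hx).
      apply (Hdelta t x0 t x); try lra.
      rewrite Rminus_eq_0, Rabs_R0; apply cond_pos.
  - apply Rlt_le_trans with ((d - c + 1) * (eps / (d - c + 1))).
    + apply Rmult_lt_compat_r; lra.
    + right; field; lra.
Qed.

Lemma continuity_pt_RInt_param (c d x0 : R) :
  continuity_pt (fun x => RInt (F x) c d) x0.
Proof.
  destruct (Rle_dec c d) as [Hcd | Hdc]; [now apply continuity_pt_RInt_param_le |].
  apply continuity_pt_ext with (fun x => - RInt (F x) d c).
  - intros x; rewrite <- (opp_RInt_swap (V := R_CompleteNormedModule))
      by (apply ex_RInt_continuity_pt; intros; apply continuity_2d_pt_snd, F_cont).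
    change (opp ?u) with (- u); ring.
  - apply continuity_pt_opp, continuity_pt_RInt_param_le; lra.
Qed.

End ContinuousParametricIntegral.

Lemma is_derive_RInt_upper (f : R -> R) (a t : R) :
  (forall x, continuity_pt f x) -> is_derive (fun u => RInt f a u) t (f t).
Proof.
  intros Hf; apply (is_derive_RInt (V := R_NormedModule) f _ a).
  - apply filter_forall; intros u.
    apply (RInt_correct (V := R_CompleteNormedModule)), ex_RInt_continuity_pt, Hf.
  - apply continuity_pt_filterlim, Hf.
Qed.

(* Both sides, as functions of the upper bound b, vanish at b = a and have the same
   derivative x |-> int_c^d F x z dz. *)
Lemma RInt_RInt_swap (F : R -> R -> R) (a b c d : R) :
  (forall x z, continuity_2d_pt F x z) ->
  RInt (fun x => RInt (fun z => F x z) c d) a b =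
  RInt (fun z => RInt (fun x => F x z) a b) c d :> R.
Proof.
  intros HF.
  set (I := fun x => RInt (fun z => F x z) c d).
  assert (HFswap : forall z x, continuity_2d_pt (fun z x => F x z) z x)
    by (intros; apply continuity_2d_pt_swap, HF).
  assert (HdF : forall z t, is_derive (fun u => RInt (fun x => F x z) a u) t (F t z))
    by (intros z t; apply (is_derive_RInt_upper (fun x => F x z)); intros;
        apply continuity_2d_pt_fst, HF).
  assert (HdL : forall t, is_derive (fun t => RInt I a t) t (I t))
    by (intros; apply is_derive_RInt_upper; intros; apply (continuity_pt_RInt_param F HF)).
  assert (HdR : forall t,
            is_derive (fun t => RInt (fun z => RInt (fun x => F x z) a t) c d) t (I t)).
  { intros t; unfold I.
    rewrite (RInt_ext_R (fun z => F t z)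
               (fun z => Derive (fun u => RInt (fun x => F x z) a u) t))
      by (intros; symmetry; apply is_derive_unique, HdF).
    apply (is_derive_RInt_param (fun t z => RInt (fun x => F x z) a t)).
    - apply filter_forall; intros u z _; eexists; apply HdF.
    - intros z _; apply continuity_2d_pt_ext with F; [| apply HF].
      intros; symmetry; apply is_derive_unique, HdF.
    - apply filter_forall; intros u; apply ex_RInt_continuity_pt; intros z.
      apply (continuity_pt_RInt_param (fun z x => F x z)), HFswap. }
  set (H := fun t => RInt I a t - RInt (fun z => RInt (fun x => F x z) a t) c d).
  assert (HdH : forall t, is_derive H t 0).
  { intros t; replace 0 with (I t - I t) by ring.
    apply (is_derive_minus (K := R_AbsRing) (V := R_NormedModule)); auto. }
  destruct (MVT_gen H a b (fun _ => 0)) as [x [_ Hx]].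
  - intros; apply HdH.
  - intros; apply (continuity_pt_of_is_derive _ _ HdH).
  - unfold H in Hx; rewrite Rmult_0_l, (RInt_point (V := R_CompleteNormedModule)) in Hx.
    rewrite (RInt_ext_R (fun z => RInt (fun x => F x z) a a)
               (fun _ => 0)), RInt_zero in Hx
      by (intros; apply (RInt_point (V := R_CompleteNormedModule))).
    change (@zero R_CompleteNormedModule) with 0 in Hx.
    unfold I in *; lra.
Qed.

Lemma continuity_pt_Rmax_0 (t : R) : continuity_pt (Rmax 0) t.
Proof.
  apply continuity_pt_ext with (fun t => (t + Rabs t) / 2).
  - intros x; unfold Rmax; destruct (Rle_dec 0 x).
    + rewrite Rabs_right; lra.
    + rewrite Rabs_left; lra.
  - apply continuity_pt_div.
    + apply continuity_pt_plus; [apply continuity_pt_id | apply Rcontinuity_abs].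
    + apply continuity_pt_const; intros ? ?; reflexivity.
    + lra.
Qed.

Lemma continuity_pt_relu_pow (p : nat) (t : R) : continuity_pt (relu_pow p) t.
Proof.
  induction p as [| p IH]; unfold relu_pow; simpl.
  - apply continuity_pt_const; intros ? ?; reflexivity.
  - apply continuity_pt_mult; [apply continuity_pt_Rmax_0 | apply IH].
Qed.

Lemma continuity_pt_relu_pow_sub_l (p : nat) (c t : R) :
  continuity_pt (fun t => relu_pow p (c - t)) t.
Proof.
  apply (continuity_pt_comp (fun t => c - t)), continuity_pt_relu_pow.
  apply continuity_pt_minus; [apply continuity_pt_const; intros ? ?; reflexivity |].
  apply continuity_pt_id.
Qed.

Lemma continuity_pt_relu_pow_sub_r (p : nat) (c t : R) :
  continuity_pt (fun t => relu_pow p (t - c)) t.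
Proof.
  apply (continuity_pt_comp (fun t => t - c)), continuity_pt_relu_pow.
  apply continuity_pt_minus; [apply continuity_pt_id |].
  apply continuity_pt_const; intros ? ?; reflexivity.
Qed.

Lemma relu_pow_nonneg (p : nat) (t : R) : 0 <= t -> relu_pow p t = t ^ p.
Proof. intros Ht; unfold relu_pow; rewrite Rmax_right; auto. Qed.

Lemma relu_pow_nonpos (p : nat) (t : R) : (1 <= p)%nat -> t <= 0 -> relu_pow p t = 0.
Proof. intros Hp Ht; unfold relu_pow; rewrite Rmax_left by exact Ht; apply pow_i; lia. Qed.

Section RepeatedIntegration.

Variable phi : R -> R.
Hypothesis phi_smooth : forall n x, ex_derive_n phi n x.

Lemma is_derive_Derive_n (n : nat) (x : R) :
  is_derive (Derive_n phi n) x (Derive_n phi (S n) x).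
Proof. apply Derive_correct, (phi_smooth (S n) x). Qed.

Lemma continuity_pt_Derive_n (n : nat) (x : R) : continuity_pt (Derive_n phi n) x.
Proof. apply (continuity_pt_of_is_derive _ _ (is_derive_Derive_n n)). Qed.

Lemma RInt_Derive_n_S (n : nat) (a b : R) :
  RInt (Derive_n phi (S n)) a b = Derive_n phi n b - Derive_n phi n a :> R.
Proof.
  apply is_RInt_unique, (is_RInt_derive (V := R_CompleteNormedModule) (Derive_n phi n)).
  - intros; apply is_derive_Derive_n.
  - intros; apply continuity_pt_filterlim, continuity_pt_Derive_n.
Qed.

Lemma RInt_pow_sub_Derive_n_left (a : R) (phi_flat : forall n, Derive_n phi n a = 0)
  (m j : nat) (z : R) :
  RInt (fun x => (z - x) ^ m * Derive_n phi (S m + j) x) a z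
  = INR (fact m) * Derive_n phi j z :> R.
Proof.
  revert j; induction m as [| m IH]; intros j.
  - rewrite (RInt_ext_R _ (Derive_n phi (S j))) by (intros; simpl; ring).
    rewrite RInt_Derive_n_S, phi_flat; simpl; ring.
  - rewrite (RInt_by_parts (fun x => (z - x) ^ S m) (fun x => - INR (S m) * (z - x) ^ m)
               (Derive_n phi (S m + j)) (Derive_n phi (S (S m) + j))).
    + rewrite phi_flat, Rminus_eq_0, pow_i by lia.
      rewrite (RInt_ext_R _
                 (fun x => - INR (S m) * ((z - x) ^ m * Derive_n phi (S m + j) x)))
        by (intros; ring).
      rewrite RInt_mult_l, IH.
      * rewrite fact_simpl, mult_INR; ring.
      * apply ex_RInt_continuity_pt; intros; apply continuity_pt_mult;
          [apply continuity_pt_pow_sub_l | apply continuity_pt_Derive_n].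
    + intros; apply is_derive_pow_sub_l.
    + intros; apply is_derive_Derive_n.
    + intros; apply continuity_pt_mult;
        [apply continuity_pt_const; intros ? ?; reflexivity | apply continuity_pt_pow_sub_l].
    + apply continuity_pt_Derive_n.
Qed.

Lemma RInt_pow_sub_Derive_n_right (b : R) (phi_flat : forall n, Derive_n phi n b = 0)
  (m j : nat) (y : R) :
  RInt (fun x => (x - y) ^ m * Derive_n phi (S m + j) x) y b
  = (-1) ^ S m * INR (fact m) * Derive_n phi j y :> R.
Proof.
  revert j; induction m as [| m IH]; intros j.
  - rewrite (RInt_ext_R _ (Derive_n phi (S j))) by (intros; simpl; ring).
    rewrite RInt_Derive_n_S, phi_flat; simpl; ring.
  - rewrite (RInt_by_parts (fun x => (x - y) ^ S m) (fun x => INR (S m) * (x - y) ^ m)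
               (Derive_n phi (S m + j)) (Derive_n phi (S (S m) + j))).
    + rewrite phi_flat, Rminus_eq_0, pow_i by lia.
      rewrite (RInt_ext_R _
                 (fun x => INR (S m) * ((x - y) ^ m * Derive_n phi (S m + j) x)))
        by (intros; ring).
      rewrite RInt_mult_l, IH.
      * rewrite fact_simpl, mult_INR; simpl; ring.
      * apply ex_RInt_continuity_pt; intros; apply continuity_pt_mult;
          [apply continuity_pt_pow_sub_r | apply continuity_pt_Derive_n].
    + intros; apply is_derive_pow_sub_r.
    + intros; apply is_derive_Derive_n.
    + intros; apply continuity_pt_mult;
        [apply continuity_pt_const; intros ? ?; reflexivity | apply continuity_pt_pow_sub_r].
    + apply continuity_pt_Derive_n.
Qed.

Lemma RInt_relu_pow_Derive_n_left (a b : R) (phi_flat : forall n, Derive_n phi n a = 0)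
  (p j : nat) (z : R) : (1 <= p)%nat -> a <= z <= b ->
  RInt (fun x => relu_pow p (z - x) * Derive_n phi (S p + j) x) a b
  = INR (fact p) * Derive_n phi j z :> R.
Proof.
  intros Hp Hz.
  rewrite <- (RInt_Chasles (V := R_CompleteNormedModule) _ a z b)
    by (apply ex_RInt_continuity_pt; intros; apply continuity_pt_mult;
        [apply continuity_pt_relu_pow_sub_l | apply continuity_pt_Derive_n]).
  rewrite (RInt_ext_R _ (fun x => (z - x) ^ p * Derive_n phi (S p + j) x) a z),
    (RInt_ext_R _ (fun _ => 0) z b), RInt_zero, (RInt_pow_sub_Derive_n_left a phi_flat).
  - change (plus ?u 0) with (u + 0); ring.
  - intros x Hx; rewrite Rmin_left, Rmax_right in Hx by lra.
    rewrite relu_pow_nonpos by (auto; lra); ring.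
  - intros x Hx; rewrite Rmin_left, Rmax_right in Hx by lra.
    rewrite relu_pow_nonneg by lra; reflexivity.
Qed.

Lemma RInt_relu_pow_Derive_n_right (a b : R) (phi_flat : forall n, Derive_n phi n b = 0)
  (p j : nat) (y : R) : (1 <= p)%nat -> a <= y <= b ->
  RInt (fun x => relu_pow p (x - y) * Derive_n phi (S p + j) x) a b
  = (-1) ^ S p * INR (fact p) * Derive_n phi j y :> R.
Proof.
  intros Hp Hy.
  rewrite <- (RInt_Chasles (V := R_CompleteNormedModule) _ a y b)
    by (apply ex_RInt_continuity_pt; intros; apply continuity_pt_mult;
        [apply continuity_pt_relu_pow_sub_r | apply continuity_pt_Derive_n]).
  rewrite (RInt_ext_R _ (fun _ => 0) a y),
    (RInt_ext_R _ (fun x => (x - y) ^ p * Derive_n phi (S p + j) x) y b),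
    RInt_zero, (RInt_pow_sub_Derive_n_right b phi_flat).
  - change (plus 0 ?u) with (0 + u); ring.
  - intros x Hx; rewrite Rmin_left, Rmax_right in Hx by lra.
    rewrite relu_pow_nonneg by lra; reflexivity.
  - intros x Hx; rewrite Rmin_left, Rmax_right in Hx by lra.
    rewrite relu_pow_nonpos by (auto; lra); ring.
Qed.

End RepeatedIntegration.

Lemma RInt_G_mult (p : nat) (y : R) (psi : R -> R) :
  (forall x, continuity_pt psi x) ->
  RInt (fun x => G p x y * psi x) (-1) 1
  = RInt (fun z => relu_pow p (z - y) * RInt (fun x => relu_pow p (z - x) * psi x) (-1) 1)
      (-1) 1 :> R.
Proof.
  intros Hpsi.
  set (F := fun x z => relu_pow p (z - y) * (relu_pow p (z - x) * psi x)).
  assert (HF : forall x z, continuity_2d_pt F x z).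
  { intros x z; apply continuity_2d_pt_mult; [| apply continuity_2d_pt_mult].
    - apply (continuity_1d_2d_pt_comp (relu_pow p) (fun _ v => v - y));
        [apply continuity_pt_relu_pow |].
      apply continuity_2d_pt_minus; [apply continuity_2d_pt_id2 | apply continuity_2d_pt_const].
    - apply (continuity_1d_2d_pt_comp (relu_pow p) (fun u v => v - u));
        [apply continuity_pt_relu_pow |].
      apply continuity_2d_pt_minus; [apply continuity_2d_pt_id2 | apply continuity_2d_pt_id1].
    - apply (continuity_1d_2d_pt_comp psi (fun u _ => u)); [apply Hpsi | apply continuity_2d_pt_id1]. }
  rewrite (RInt_ext_R _ (fun x => RInt (fun z => F x z) (-1) 1)).
  - rewrite RInt_RInt_swap by exact HF.
    apply RInt_ext_R; intros z _; unfold F.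
    rewrite RInt_mult_l; [reflexivity |].
    apply ex_RInt_continuity_pt; intros; apply continuity_pt_mult;
      [apply continuity_pt_relu_pow_sub_l | apply Hpsi].
  - intros x _; unfold G, F; rewrite <- RInt_mult_r.
    + apply RInt_ext_R; intros; ring.
    + apply ex_RInt_continuity_pt; intros; apply continuity_pt_mult;
        apply continuity_pt_relu_pow_sub_r.
Qed.

Lemma Derive_n_eq_0_outside (phi : R -> R) (a b : R) :
  (forall x, x < a \/ b < x -> phi x = 0) ->
  forall n x, x < a \/ b < x -> Derive_n phi n x = 0.
Proof.
  intros Hs n x Hx.
  assert (Hloc : locally x (fun t => phi t = 0)).
  { destruct Hx as [Hx | Hx].
    - exists (mkposreal (a - x) ltac:(lra)); intros t Ht.
      change (Rabs (t - x) < a - x) in Ht; apply Hs; left.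
      destruct (Rabs_def2 _ _ Ht); lra.
    - exists (mkposreal (x - b) ltac:(lra)); intros t Ht.
      change (Rabs (t - x) < x - b) in Ht; apply Hs; right.
      destruct (Rabs_def2 _ _ Ht); lra. }
  rewrite (Derive_n_ext_loc _ (fun _ => 0) n x Hloc).
  destruct n; [reflexivity | apply Derive_n_const].
Qed.

Theorem lemma1 (p : nat) (hp : (1 <= p)%nat) (y : R) (hy : -1 <= y <= 1) :
  distr_deriv_n_eq (fun x => G p x y) (2 * p + 2)
    (fun phi => (-1) ^ (p - 1) * (INR (fact p)) ^ 2 * dirac y phi).
Proof.
  intros phi [Hsmooth [a [b [Ha [Hb Hs]]]]]; unfold dirac.
  assert (Hleft : forall n, Derive_n phi n (-1) = 0)
    by (intros; apply (Derive_n_eq_0_outside phi a b); auto; lra).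
  assert (Hright : forall n, Derive_n phi n 1 = 0)
    by (intros; apply (Derive_n_eq_0_outside phi a b); auto; lra).
  assert (Hinner : forall z, -1 <= z <= 1 ->
    RInt (fun x => relu_pow p (z - x) * Derive_n phi (2 * p + 2) x) (-1) 1
    = INR (fact p) * Derive_n phi (S p + 0) z :> R).
  { intros z Hz; replace (2 * p + 2)%nat with (S p + S p)%nat by lia.
    rewrite Nat.add_0_r; now apply RInt_relu_pow_Derive_n_left. }
  assert (Hsign : (-1) ^ (2 * p + 2) = 1).
  { replace (2 * p + 2)%nat with (2 * S p)%nat by lia; apply pow_1_even. }
  rewrite Hsign, RInt_G_mult by apply (continuity_pt_Derive_n phi Hsmooth).
  rewrite (RInt_ext_R _
             (fun z => INR (fact p) * (relu_pow p (z - y) * Derive_n phi (S p + 0) z))).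
  2:{ intros z Hz; rewrite Rmin_left, Rmax_right in Hz by lra.
      rewrite Hinner by lra; ring. }
  rewrite RInt_mult_l.
  2:{ apply ex_RInt_continuity_pt; intros; apply continuity_pt_mult;
        [apply continuity_pt_relu_pow_sub_r | apply (continuity_pt_Derive_n phi Hsmooth)]. }
  rewrite (RInt_relu_pow_Derive_n_right phi Hsmooth (-1) 1) by auto.
  destruct p as [| q]; [lia |].
  replace (S q - 1)%nat with q by lia; simpl; ring.
Qed.
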